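(* Let $\Delta$ be a compact convex polygon in a $2$-dimensional real affine space with direction space $V$, and associate to each edge its normal line, a point of $\mathbb P(V^* )\cong\mathbb{RP}^1$. Then $\Delta$ is of rational type if and only if either $\Delta$ has at most $3$ distinct normal lines, or it has at least $4$ distinct normal lines and the cross-ratio of any four distinct ones is rational. In particular a quadrilateral is of rational type iff it has at most three distinct normal lines or the cross-ratio of its four normal lines is rational.
   Context: $\Delta$ is of rational type if there exists a lattice $\Lambda\subset V^*$ such that every edge has a normal vector lying in $\Lambda$. The cross-ratio of four distinct points $P_i=[x_i:y_i]\in\mathbb{RP}^1$ is $\mathbf r(P_1,P_2;P_3,P_4)=\frac{(x_1y_3-y_1x_3)(x_2y_4-y_2x_4)}{(x_1y_4-y_1x_4)(x_2y_3-y_2x_3)}$; whether it is rational does not depend on the ordering. *)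

(* The affine plane is modelled as R^2 = R * R over an
   arbitrary real field R (every 2-dim real affine space is affinely
   isomorphic to R^2, and the statement is invariant under such isos). *)
From HB Require Import structures.
From mathcomp Require Import all_boot all_order all_algebra.
Set Implicit Arguments. Unset Strict Implicit. Unset Printing Implicit Defensive.
Import Order.TTheory GRing.Theory Num.Theory.
Local Open Scope ring_scope.

Section Defs.
Variable R : realFieldType.

Definition det2 (a b : R * R) : R := a.1 * b.2 - a.2 * b.1.

(* pairing of a covector xi in dual V = R^2 with a vector x in V = R^2 *)
Definition pairing (xi x : R * R) : R := xi.1 * x.1 + xi.2 * x.2.

(* A compact convex polygon Delta is given by its n >= 3 vertices
   v 0, ..., v (n-1), listed counterclockwise and in strictly convex
   position: every other vertex lies strictly to the left of the oriented
   line through v i and its cyclic successor v (ordS i).  Delta is the convex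
   hull of the v i and its edges are the segments [v i, v (ordS i)]. *)
Definition convex_polygon (n : nat) (v : 'I_n -> R * R) : Prop :=
  (3 <= n)%N /\
  forall i j : 'I_n, j != i -> j != ordS i ->
    0 < det2 ((v (ordS i)).1 - (v i).1, (v (ordS i)).2 - (v i).2)
             ((v j).1 - (v i).1, (v j).2 - (v i).2).

Definition edge_dir (n : nat) (v : 'I_n -> R * R) (i : 'I_n) : R * R :=
  ((v (ordS i)).1 - (v i).1, (v (ordS i)).2 - (v i).2).

(* homogeneous coordinates (x, y) of the point of P(dual V) = RP^1 given by
   the normal line of the i-th edge: the covectors annihilating edge_dir v i *)
Definition normal_line (n : nat) (v : 'I_n -> R * R) (i : 'I_n) : R * R :=
  (- (edge_dir v i).2, (edge_dir v i).1).

Definition proj_distinct (P Q : R * R) : Prop := det2 P Q != 0.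

Definition distinct4 (P1 P2 P3 P4 : R * R) : Prop :=
  proj_distinct P1 P2 /\ proj_distinct P1 P3 /\ proj_distinct P1 P4 /\
  proj_distinct P2 P3 /\ proj_distinct P2 P4 /\ proj_distinct P3 P4.

Definition cross_ratio (P1 P2 P3 P4 : R * R) : R :=
  (det2 P1 P3 * det2 P2 P4) / (det2 P1 P4 * det2 P2 P3).

Definition is_rational (x : R) : Prop := exists q : rat, x = ratr q.

Definition in_lattice (a b xi : R * R) : Prop :=
  exists m k : int, xi = (m%:~R * a.1 + k%:~R * b.1, m%:~R * a.2 + k%:~R * b.2).

Definition rational_type (n : nat) (v : 'I_n -> R * R) : Prop :=
  exists a b : R * R, det2 a b != 0 /\
    forall i : 'I_n, exists xi : R * R,
      xi != (0, 0) /\ in_lattice a b xi /\ pairing xi (edge_dir v i) = 0.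

End Defs.

(* Points of RP^1 are handled in homogeneous coordinates; det2 is the
   SL_2-invariant pairing, so det2 P Q = 0 means P and Q are the same point.

   - Forward direction: if every normal line is spanned by a point of a lattice
     Z a + Z b, then up to scaling the four points are lattice points
     m a + k b, and their cross-ratio is a ratio of integer 2x2 minors, since
     det2 (m a + k b) (m' a + k' b) = (m k' - k m') det2 a b (the scalings
     cancel in the cross-ratio).
   - Backward direction: fix two distinct normal lines A, B.  If every other
     normal line equals A or B, the lattice Z A + Z B works.  Otherwise pick a
     third one N and use the adapted lattice spanned by a = det2 N B . A and
     b = det2 A N . B: then a + b is a multiple of N, and a normal line C
     distinct from A, B, N with r(A,B;N,C) = p/d is spanned by p a + d b.
   - Convexity guarantees that two consecutive edges have distinct normal
     lines, which provides A and B. *)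
From Stdlib Require Import Classical.
From HB Require Import structures.
From mathcomp Require Import all_boot all_order all_algebra ring.
Import Order.TTheory GRing.Theory Num.Theory.
Set Implicit Arguments. Unset Strict Implicit. Unset Printing Implicit Defensive.
Local Open Scope ring_scope.

Section NormalLattices.
Variable R : realFieldType.
Implicit Types (P Q A B C N a b xi : R * R) (c : R) (m k : int).

Definition scale c P : R * R := (c * P.1, c * P.2).

Definition lat a b m k : R * R :=
  (m%:~R * a.1 + k%:~R * b.1, m%:~R * a.2 + k%:~R * b.2).

Definition lattice_normal a b C : Prop :=
  exists xi, xi != (0, 0) /\ in_lattice a b xi /\ det2 xi C = 0.

Lemma det2_scalel c P Q : det2 (scale c P) Q = c * det2 P Q.
Proof. rewrite /det2 /=; ring. Qed.

Lemma det2_scaler c P Q : det2 P (scale c Q) = c * det2 P Q.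
Proof. rewrite /det2 /=; ring. Qed.

Lemma det2_self P : det2 P P = 0.
Proof. by rewrite /det2 mulrC subrr. Qed.

Lemma det2C P Q : det2 Q P = - det2 P Q.
Proof. rewrite /det2; ring. Qed.

Lemma det2_lat a b m k m' k' :
  det2 (lat a b m k) (lat a b m' k') = (m * k' - k * m')%:~R * det2 a b.
Proof. rewrite intrB !intrM /lat /det2 /=; ring. Qed.

Lemma det2_neq0r P Q : det2 P Q != 0 -> Q != (0, 0).
Proof. by apply: contraNneq => ->; rewrite /det2 /= !mulr0 subrr. Qed.

Lemma det2_eq0_scale P Q : P != (0, 0) -> det2 P Q = 0 ->
  exists c, Q = scale c P.
Proof.
case: P Q => [p1 p2] [q1 q2] hP; rewrite /det2 /= => hd.
have hs : p1 * p1 + p2 * p2 != 0.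
  apply: contra hP; rewrite -!expr2 paddr_eq0 ?sqr_ge0 // !sqrf_eq0.
  by case/andP=> /eqP-> /eqP->.
exists ((p1 * q1 + p2 * q2) / (p1 * p1 + p2 * p2)); rewrite /scale /=.
congr (_, _); apply: (mulIf hs); rewrite mulrAC divfK //.
- by rewrite -[RHS]subr0 -(mulr0 p2) -hd; ring.
- by rewrite -[RHS]addr0 -(mulr0 p1) -hd; ring.
Qed.

Lemma lat_neq0 a b m k : det2 a b != 0 -> (m != 0) || (k != 0) ->
  lat a b m k != (0, 0).
Proof.
move=> hab /orP[hm|hk].
- apply: (@det2_neq0r (lat a b 0 1)).
  by rewrite det2_lat !mul0r add0r mul1r intrN mulf_neq0 ?oppr_eq0 ?intr_eq0.
- apply: (@det2_neq0r (lat a b 1 0)).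
  by rewrite det2_lat mul1r mul0r subr0 mulf_neq0 ?intr_eq0.
Qed.

Lemma divMl K (x y : R) : K != 0 -> (K * x) / (K * y) = x / y.
Proof. by move=> hK; rewrite -mulf_div divff // mul1r. Qed.

Lemma cross_ratio_scale c1 c2 c3 c4 P1 P2 P3 P4 :
  c1 != 0 -> c2 != 0 -> c3 != 0 -> c4 != 0 ->
  cross_ratio (scale c1 P1) (scale c2 P2) (scale c3 P3) (scale c4 P4)
  = cross_ratio P1 P2 P3 P4.
Proof.
move=> h1 h2 h3 h4; rewrite /cross_ratio !det2_scalel !det2_scaler.
have hK : c1 * c2 * c3 * c4 != 0 by rewrite !mulf_neq0.
by rewrite -(divMl (det2 P1 P3 * _) (det2 P1 P4 * _) hK); congr (_ / _); ring.
Qed.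

(* cross-ratios of lattice points are ratios of integer minors *)
Lemma cross_ratio_lat a b m1 k1 m2 k2 m3 k3 m4 k4 : det2 a b != 0 ->
  is_rational (cross_ratio (lat a b m1 k1) (lat a b m2 k2)
                           (lat a b m3 k3) (lat a b m4 k4)).
Proof.
move=> hab; rewrite /cross_ratio !det2_lat.
set z13 := m1 * k3 - k1 * m3; set z24 := m2 * k4 - k2 * m4.
set z14 := m1 * k4 - k1 * m4; set z23 := m2 * k3 - k2 * m3.
exists ((z13 * z24)%:~R / (z14 * z23)%:~R).
rewrite fmorph_div /= !ratr_int !intrM.
have hD : det2 a b * det2 a b != 0 by rewrite mulf_neq0.
by rewrite -(divMl (z13%:~R * _) (z14%:~R * _) hD); congr (_ / _); ring.
Qed.

Lemma cross_ratio_swap34 P1 P2 P3 P4 :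
  cross_ratio P1 P2 P4 P3 = (cross_ratio P1 P2 P3 P4)^-1.
Proof. by rewrite /cross_ratio invf_div. Qed.

Lemma is_rationalV (x : R) : is_rational x -> is_rational x^-1.
Proof. by case=> q ->; exists q^-1; rewrite fmorphV. Qed.

Lemma lattice_normal_cross_ratio a b P1 P2 P3 P4 : det2 a b != 0 ->
  lattice_normal a b P1 -> lattice_normal a b P2 ->
  lattice_normal a b P3 -> lattice_normal a b P4 ->
  distinct4 P1 P2 P3 P4 -> is_rational (cross_ratio P1 P2 P3 P4).
Proof.
have on_lattice P : lattice_normal a b P -> exists c m k, P = scale c (lat a b m k).
  case=> xi [hxi [[m [k hxi_lat]] hP]].
  by have [c ->] := det2_eq0_scale hxi hP; rewrite hxi_lat; exists c, m, k.
have scale_neq0 c P Q : det2 (scale c P) Q != 0 -> c != 0.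
  by rewrite det2_scalel; apply: contraNneq => ->; rewrite mul0r.
move=> hab /on_lattice[c1 [m1 [k1 ->]]] /on_lattice[c2 [m2 [k2 ->]]].
move=> /on_lattice[c3 [m3 [k3 ->]]] /on_lattice[c4 [m4 [k4 ->]]].
case=> h12 [_ [_ [h23 [_ h34]]]]; rewrite /proj_distinct in h12 h23 h34.
have h43 := h34; rewrite det2C oppr_eq0 in h43.
rewrite cross_ratio_scale; first exact: cross_ratio_lat.
- exact: scale_neq0 _ _ _ h12.
- exact: scale_neq0 _ _ _ h23.
- exact: scale_neq0 _ _ _ h34.
- exact: scale_neq0 _ _ _ h43.
Qed.

Lemma lattice_normal_basis a b C : det2 a b != 0 ->
  det2 a C = 0 \/ det2 b C = 0 -> lattice_normal a b C.
Proof.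
move=> hab [haC|hbC].
- exists (lat a b 1 0); split; first exact: lat_neq0.
  split; first by exists 1, 0.
  by rewrite /lat /= !mul1r !mul0r !addr0.
- exists (lat a b 0 1); split; first exact: lat_neq0.
  split; first by exists 0, 1.
  by rewrite /lat /= !mul1r !mul0r !add0r.
Qed.

Section AdaptedLattice.
Variables A B N : R * R.
Hypotheses (hAB : det2 A B != 0) (hAN : det2 A N != 0) (hBN : det2 B N != 0).

Let a := scale (det2 N B) A.
Let b := scale (det2 A N) B.

Lemma adapted_det2 : det2 a b != 0.
Proof.
rewrite /a /b det2_scalel det2_scaler !mulf_neq0 //.
by rewrite det2C oppr_eq0.
Qed.

Lemma det2_adapted m k C :
  det2 (lat a b m k) C
  = m%:~R * (det2 N B * det2 A C) + k%:~R * (det2 A N * det2 B C).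
Proof. rewrite /lat /a /b /det2 /=; ring. Qed.

(* a + b spans the point N (an instance of the Pluecker relation) *)
Lemma det2_adapted_sum C : det2 (lat a b 1 1) C = det2 A B * det2 N C.
Proof. rewrite /lat /a /b /det2 /=; ring. Qed.

Lemma adapted_lattice_normal C :
  (distinct4 A B N C -> is_rational (cross_ratio A B N C)) ->
  lattice_normal a b C.
Proof.
have hab := adapted_det2.
move=> hrat; have [hAC|hAC] := eqVneq (det2 A C) 0.
  by apply: lattice_normal_basis => //; left; rewrite /a det2_scalel hAC mulr0.
have [hBC|hBC] := eqVneq (det2 B C) 0.
  by apply: lattice_normal_basis => //; right; rewrite /b det2_scalel hBC mulr0.
have [hNC|hNC] := eqVneq (det2 N C) 0.
  exists (lat a b 1 1); split; first by apply: lat_neq0; rewrite ?oner_eq0.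
  split; first by exists 1, 1.
  by rewrite det2_adapted_sum hNC mulr0.
have [q hq] : is_rational (cross_ratio A B N C).
  by apply: hrat; rewrite /distinct4 /proj_distinct hAB hAN hAC hBN hBC hNC.
exists (lat a b (numq q) (denq q)); split.
  by apply: lat_neq0 => //; rewrite denq_neq0 orbT.
split; first by exists (numq q), (denq q).
move: hq; rewrite /cross_ratio /ratr => /eqP.
rewrite eqr_div ?mulf_neq0 ?intr_eq0 ?denq_neq0 // => /eqP hq.
rewrite det2_adapted [X in _ + X]mulrC hq (det2C B N); ring.
Qed.

End AdaptedLattice.

Lemma rational_typeE n (v : 'I_n -> R * R) :
  rational_type v <->
  exists a b, det2 a b != 0 /\ forall i, lattice_normal a b (normal_line v i).
Proof.
have pairingE xi i : pairing xi (edge_dir v i) = det2 xi (normal_line v i).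
  by rewrite /pairing /det2 /normal_line /=; ring.
split=> -[a [b [hab hv]]]; exists a, b; split=> // i.
- by have [xi [? [? hp]]] := hv i; exists xi; rewrite -pairingE.
- by have [xi [? [? hp]]] := hv i; exists xi; rewrite pairingE.
Qed.

Lemma rational_type_cross_ratio n (v : 'I_n -> R * R) : rational_type v ->
  forall i j k l : 'I_n, distinct4 (normal_line v i) (normal_line v j)
                            (normal_line v k) (normal_line v l) ->
  is_rational (cross_ratio (normal_line v i) (normal_line v j)
                           (normal_line v k) (normal_line v l)).
Proof.
move=> /rational_typeE[a [b [hab hv]]] i j k l.
exact: lattice_normal_cross_ratio hab (hv i) (hv j) (hv k) (hv l).
Qed.

Lemma cross_ratio_rational_type n (v : 'I_n -> R * R) i0 i1 :
  det2 (normal_line v i0) (normal_line v i1) != 0 ->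
  (forall k l : 'I_n, distinct4 (normal_line v i0) (normal_line v i1)
                         (normal_line v k) (normal_line v l) ->
     is_rational (cross_ratio (normal_line v i0) (normal_line v i1)
                              (normal_line v k) (normal_line v l))) ->
  rational_type v.
Proof.
set A := normal_line v i0; set B := normal_line v i1 => hAB hrat.
apply/rational_typeE.
have [[k [hAN hBN]]|none] := classic (exists k : 'I_n,
  det2 A (normal_line v k) != 0 /\ det2 B (normal_line v k) != 0).
  exists (scale (det2 (normal_line v k) B) A), (scale (det2 A (normal_line v k)) B).
  split; first exact: adapted_det2.
  by move=> i; apply: adapted_lattice_normal => //; apply: hrat.
exists A, B; split=> // i; apply: lattice_normal_basis => //.
have [hA|hA] := eqVneq (det2 A (normal_line v i)) 0; first by left.
have [hB|hB] := eqVneq (det2 B (normal_line v i)) 0; first by right.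
by exfalso; apply: none; exists i.
Qed.

Lemma convex_first_normals n (v : 'I_n.+3 -> R * R) : convex_polygon v ->
  det2 (normal_line v ord0) (normal_line v (ordS ord0)) != 0.
Proof.
case=> _ hconvex.
have /(_ isT isT) := hconvex ord0 (ordS (ordS ord0)).
rewrite /normal_line /edge_dir /det2 /= => /gt_eqF/negbT.
by apply: contra_neq => <-; ring.
Qed.

Lemma ord4_cases (k : 'I_4) : [\/ k = 0, k = 1, k = 2 | k = 3].
Proof.
by case: k => [[|[|[|[|k]]]] hk] //; [constructor 1|constructor 2|constructor 3
  |constructor 4]; apply/val_inj.
Qed.

(* for a quadrilateral, the only further pairs k, l distinct from 0 and 1 are
   (2, 3) and (3, 2), and the second just inverts the cross-ratio *)
Lemma quadrilateral_cross_ratios (v : 'I_4 -> R * R) :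
  (distinct4 (normal_line v 0) (normal_line v 1)
             (normal_line v 2) (normal_line v 3) ->
   is_rational (cross_ratio (normal_line v 0) (normal_line v 1)
                            (normal_line v 2) (normal_line v 3))) ->
  forall k l : 'I_4, distinct4 (normal_line v 0) (normal_line v 1)
                               (normal_line v k) (normal_line v l) ->
  is_rational (cross_ratio (normal_line v 0) (normal_line v 1)
                           (normal_line v k) (normal_line v l)).
Proof.
move=> hrat k l hd; have [h01 [h0k [h0l [h1k [h1l hkl]]]]] := hd.
rewrite /proj_distinct in h0k h0l h1k h1l hkl.
case: (ord4_cases k) => Ek; subst k; case: (ord4_cases l) => El; subst l;
  rewrite ?det2_self ?eqxx // in h0k h1k h0l h1l hkl; first exact: hrat.
rewrite cross_ratio_swap34; apply/is_rationalV/hrat.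
by do !split=> //; rewrite /proj_distinct det2C oppr_eq0.
Qed.

End NormalLattices.

Theorem mainTheorem13 :
  (forall (R : realFieldType) (n : nat) (v : 'I_n -> R * R),
    convex_polygon v ->
    (rational_type v <->
      (~ (exists i j k l : 'I_n,
            distinct4 (normal_line v i) (normal_line v j)
                      (normal_line v k) (normal_line v l)))
      \/
      ((exists i j k l : 'I_n,
            distinct4 (normal_line v i) (normal_line v j)
                      (normal_line v k) (normal_line v l)) /\
       (forall i j k l : 'I_n,
            distinct4 (normal_line v i) (normal_line v j)
                      (normal_line v k) (normal_line v l) ->
            is_rational (cross_ratio (normal_line v i) (normal_line v j)
                                     (normal_line v k) (normal_line v l))))))
  /\
  (forall (R : realFieldType) (v : 'I_4 -> R * R),
    convex_polygon v ->
    (rational_type v <->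
      (~ distinct4 (normal_line v 0) (normal_line v 1)
                   (normal_line v 2) (normal_line v 3))
      \/
      (distinct4 (normal_line v 0) (normal_line v 1)
                 (normal_line v 2) (normal_line v 3) /\
       is_rational (cross_ratio (normal_line v 0) (normal_line v 1)
                                (normal_line v 2) (normal_line v 3))))).
Proof.
split.
- move=> R [|[|[|n]]] v hv; try by case: hv.
  split=> [hrt|hcases].
  + have [ex|] := classic (exists i j k l : 'I_n.+3, distinct4 (normal_line v i)
      (normal_line v j) (normal_line v k) (normal_line v l)); last by left.
    by right; split=> //; apply: rational_type_cross_ratio.
  + apply: cross_ratio_rational_type (convex_first_normals hv) _ => k l hd.
    case: hcases => [none|[_ hall]]; last exact: hall.
    by exfalso; apply: none; exists ord0, (ordS ord0), k, l.
- move=> R v hv; split=> [hrt|hcases].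
  + have [hd|] := classic (distinct4 (normal_line v 0) (normal_line v 1)
      (normal_line v 2) (normal_line v 3)); last by left.
    by right; split=> //; apply: rational_type_cross_ratio.
  + have ordS0 : ordS ord0 = 1 :> 'I_4 by apply/val_inj.
    apply: (@cross_ratio_rational_type _ _ v 0 1).
      by rewrite -ordS0; exact: convex_first_normals.
    apply: quadrilateral_cross_ratios => hd.
    by case: hcases => [[]|[]].
Qed.
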